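(* Let $|q|<1$ and $|qa|,|qk|<|z|$, with parameters such that no denominator in the definition of $f$ vanishes for either argument order. Then $f(a,k,z,q)=-f(k,a,z,q)$.
   Context: Notation: $(x;q)_n=(1-x)(1-xq)\cdots(1-xq^{n-1})$, $(x_1,\dots,x_m;q)_n=(x_1;q)_n\cdots(x_m;q)_n$. Define $$f(a,k,z,q):=\sum_{n=1}^{\infty}\frac{(q\sqrt{k},-q\sqrt{k},k,z,k/a;q)_{n}}{(\sqrt{k},-\sqrt{k},qk,qk/z,qa;q)_{n}(1-q^n)}\left(\frac{qa}{z}\right)^{n}.$$ *)

From Stdlib Require Import Reals Lra.
Open Scope R_scope.

Record Cplx := mkC { Re : R; Im : R }.

Definition C0 : Cplx := mkC 0 0.
Definition C1 : Cplx := mkC 1 0.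
Definition Cadd (x y : Cplx) : Cplx := mkC (Re x + Re y) (Im x + Im y).
Definition Copp (x : Cplx) : Cplx := mkC (- Re x) (- Im x).
Definition Csub (x y : Cplx) : Cplx := Cadd x (Copp y).
Definition Cmul (x y : Cplx) : Cplx :=
  mkC (Re x * Re y - Im x * Im y) (Re x * Im y + Im x * Re y).
Definition Cinv (x : Cplx) : Cplx :=
  let d := Re x * Re x + Im x * Im x in mkC (Re x / d) (- Im x / d).
Definition Cdiv (x y : Cplx) : Cplx := Cmul x (Cinv y).
Definition Cnorm (x : Cplx) : R := sqrt (Re x * Re x + Im x * Im x).
Fixpoint Cpow (x : Cplx) (n : nat) : Cplx :=
  match n with O => C1 | S m => Cmul x (Cpow x m) end.

Fixpoint qpoch (x q : Cplx) (n : nat) : Cplx :=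
  match n with
  | O => C1
  | S m => Cmul (qpoch x q m) (Csub C1 (Cmul x (Cpow q m)))
  end.

(* n-th summand of f(a,k,z,q), where s is a square root of k (s*s = k).
   The summand does not depend on the choice of the square root, since
   both s and -s occur symmetrically. *)
Definition f_num (a k z q s : Cplx) (n : nat) : Cplx :=
  Cmul (Cmul (Cmul (Cmul (qpoch (Cmul q s) q n) (qpoch (Copp (Cmul q s)) q n))
    (qpoch k q n)) (qpoch z q n)) (qpoch (Cdiv k a) q n).

Definition f_den (a k z q s : Cplx) (n : nat) : Cplx :=
  Cmul (Cmul (Cmul (Cmul (Cmul (qpoch s q n) (qpoch (Copp s) q n))
    (qpoch (Cmul q k) q n)) (qpoch (Cdiv (Cmul q k) z) q n))
    (qpoch (Cmul q a) q n)) (Csub C1 (Cpow q n)).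

Definition f_term (a k z q s : Cplx) (n : nat) : Cplx :=
  Cmul (Cdiv (f_num a k z q s n) (f_den a k z q s n))
       (Cpow (Cdiv (Cmul q a) z) n).

Fixpoint psum1 (u : nat -> Cplx) (N : nat) : Cplx :=
  match N with O => C0 | S M => Cadd (psum1 u M) (u (S M)) end.

Definition series1_cv (u : nat -> Cplx) (L : Cplx) : Prop :=
  forall eps : R, eps > 0 ->
    exists N : nat, forall M : nat, (M >= N)%nat -> Cnorm (Csub (psum1 u M) L) < eps.

Definition f_denoms_ok (a k z q s : Cplx) : Prop :=
  a <> C0 /\ z <> C0 /\
  forall n : nat, (1 <= n)%nat -> f_den a k z q s n <> C0.

From Pilot Require Import Defs.
From Stdlib Require Import Reals Lra Lia.
From Coquelicot Require Import Coquelicot.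

(* After the square roots cancel, the n-th term of f(a,k,z,q) is
     (1 - k q^2n) / ((1 - k q^n)(1 - q^n)) * (z, k/a; q)_n / (q k/z, q a; q)_n * (q a/z)^n.
   The difference between the series at (a, k) and at (a q, k q) telescopes, with a remainder
   R(a, k) whose terms tend to 0 and whose initial value satisfies R_0(a, k) = - R_0(k, a).
   Hence S(a, k) + S(k, a) = S(a q^m, k q^m) + S(k q^m, a q^m) for every m.  The q-Pochhammer
   denominators stay away from 0 uniformly in the shift m, so the right-hand side is O(|q|^m),
   and therefore S(a, k) + S(k, a) = 0.  For q = 0 every term vanishes. *)

(** * q-Pochhammer symbols and the telescoping identity *)

Open Scope C_scope.

Fixpoint qp (x q : C) (n : nat) : C :=
  match n with O => 1 | S m => qp x q m * (1 - x * q ^ m) end.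

Lemma qp_add x q m n : qp x q (m + n) = qp x q m * qp (x * q ^ m) q n.
Proof.
  induction n as [|n IH].
  - rewrite Nat.add_0_r; simpl; ring.
  - rewrite Nat.add_succ_r; simpl. rewrite IH, Cpow_add_r. ring.
Qed.

Lemma qp_shift x q n : qp (x * q) q n * (1 - x) = qp x q n * (1 - x * q ^ n).
Proof.
  induction n as [|n IH]; simpl; [ring|].
  transitivity (qp (x * q) q n * (1 - x) * (1 - x * q * q ^ n)); [ring|].
  rewrite IH. ring.
Qed.

Lemma Cmult_neq_0_inv (x y : C) : x * y <> 0 -> x <> 0 /\ y <> 0.
Proof. intros H; split; intros E; apply H; rewrite E; ring. Qed.

Lemma qp_neq0 x q n : (forall i, 1 - x * q ^ i <> 0) -> qp x q n <> 0.
Proof.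
  intros H; induction n as [|n IH]; simpl; [apply C1_nz | apply Cmult_neq_0; auto].
Qed.

Lemma qp_factor_neq0 x q n i : (i < n)%nat -> qp x q n <> 0 -> 1 - x * q ^ i <> 0.
Proof.
  intros Hi. replace n with (S i + (n - S i))%nat by lia.
  rewrite qp_add. intros H. apply Cmult_neq_0_inv in H as [H _].
  exact (proj2 (Cmult_neq_0_inv _ _ H)).
Qed.

Definition qterm (a k z q : C) (n : nat) : C :=
  qp z q n * qp (k / a) q n * (q * a / z) ^ n / (qp (q * k / z) q n * qp (q * a) q n).

Definition summand (a k z q : C) (n : nat) : C :=
  (1 - k * q ^ n * q ^ n) * qterm a k z q n / ((1 - k * q ^ n) * (1 - q ^ n)).

(* Certificate for the telescoping of the difference between the series at [(a, k)] and at
   [(a q, k q)], see [summand_shift_diff]. *)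
Definition remainder (a k z q : C) (N : nat) : C :=
  qterm a k z q N * (q * (z * q ^ N - 1) * (a - k * q ^ N) * (z - a * k * q * q * q ^ N)) /
   (z * (z - a * q) * (1 - k * q * q ^ N) * (1 - a * q * q ^ N) * (1 - k * q * q ^ N / z)).

(* [psum u N = u 1 + ... + u N], the indexing of [psum1]. *)
Fixpoint psum (u : nat -> C) (N : nat) : C :=
  match N with O => 0 | S M => psum u M + u (S M) end.

Record Admissible (a k z q : C) : Prop := {
  adm_a : a <> 0; adm_q : q <> 0; adm_z : z <> 0; adm_q_lt_1 : (Cmod q < 1)%R;
  adm_qa_lt_z : (Cmod (q * a) < Cmod z)%R;
  adm_qkz : forall i, 1 - q * k / z * q ^ i <> 0;
  adm_qa : forall i, 1 - q * a * q ^ i <> 0;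
  adm_qk : forall i, 1 - q * k * q ^ i <> 0 }.

Lemma neq0_of_eq_div (e f c : C) : c <> 0 -> f = e / c -> f <> 0 -> e <> 0.
Proof. intros Hc He Hf E. apply Hf. rewrite He, E. unfold Cdiv. ring. Qed.

(* The nonvanishing side goals left by [field] are the admissibility
   conditions multiplied through by [z]. *)
Ltac neq0_from h c := match type of h with ?f <> _ =>
  apply (neq0_of_eq_div _ f c); [solve [auto | apply C1_nz] | solve [field; auto] | exact h] end.

Ltac neq0_scaled z := match goal with
 | h : ?f <> _ |- _ <> _ => first [ neq0_from h (RtoC 1) | neq0_from h z ] end.

Lemma one_minus_qpow_neq0 (q : C) n : (Cmod q < 1)%R -> 1 - q ^ S n <> 0.
Proof.
  intros Hq E. assert (Hpow : q ^ S n = 1) by (apply Ceq_minus in E; auto).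
  assert (Hlt : (Cmod q ^ S n < 1)%R)
    by (pose proof (Cmod_ge_0 q); apply pow_lt_1_compat; [lra | lia]).
  rewrite <- Cmod_pow, Hpow, Cmod_1 in Hlt. lra.
Qed.

Lemma z_minus_aq_neq0 a k z q : Admissible a k z q -> z - a * q <> 0.
Proof.
  intros [_ _ _ _ Hqa _ _ _] E.
  assert (Ez : z = q * a) by (apply Ceq_minus; rewrite <- E; ring).
  rewrite Ez in Hqa. lra.
Qed.

Section Telescoping.
Variables a k z q : C.
Hypothesis H : Admissible a k z q.

Lemma qterm_succ n :
  qterm a k z q (S n) = qterm a k z q n * ((1 - z * q ^ n) * (1 - k / a * q ^ n) * (q * a / z)) /
    ((1 - q * k / z * q ^ n) * (1 - q * a * q ^ n)).
Proof.
  destruct H as [Ha Hq Hz _ _ Hkz Hqa Hqk]. unfold qterm; simpl.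
  pose proof (qp_neq0 _ q n Hkz). pose proof (qp_neq0 _ q n Hqa).
  specialize (Hkz n); specialize (Hqa n).
  field. repeat split; auto. neq0_from Hkz z.
Qed.

Lemma qterm_shift n :
  qterm (a * q) (k * q) z q n = qterm a k z q n * (1 - q * k / z) * (1 - q * a) /
    ((1 - q * k / z * q ^ n) * (1 - q * a * q ^ n)) * q ^ n.
Proof.
  destruct H as [Ha Hq Hz _ _ Hkz Hqa Hqk].
  assert (N1 : 1 - q * k / z <> 0) by (specialize (Hkz 0%nat); rewrite Cmult_1_r in Hkz; auto).
  assert (N2 : 1 - q * a <> 0) by (specialize (Hqa 0%nat); rewrite Cmult_1_r in Hqa; auto).
  assert (N3 : z - q * k <> 0) by neq0_from N1 z.
  unfold qterm.
  replace (k * q / (a * q)) with (k / a) by (field; auto).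
  replace (q * (k * q) / z) with (q * k / z * q) by (field; auto).
  replace (q * (a * q) / z) with (q * a / z * q) by (field; auto).
  replace (q * (a * q)) with (q * a * q) by ring.
  rewrite Cpow_mult_l.
  assert (E1 : qp (q * k / z * q) q n =
               qp (q * k / z) q n * (1 - q * k / z * q ^ n) / (1 - q * k / z))
    by (rewrite <- qp_shift; field; auto).
  assert (E2 : qp (q * a * q) q n = qp (q * a) q n * (1 - q * a * q ^ n) / (1 - q * a))
    by (rewrite <- qp_shift; field; auto).
  rewrite E1, E2.
  pose proof (qp_neq0 _ q n Hkz). pose proof (qp_neq0 _ q n Hqa).
  specialize (Hkz n); specialize (Hqa n).
  field. repeat split; auto; neq0_from Hkz z.
Qed.

Lemma summand_shift_diff N :
  summand a k z q (S N) - summand (a * q) (k * q) z q (S N) =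
  remainder a k z q (S N) - remainder a k z q N.
Proof.
  unfold summand, remainder. rewrite qterm_shift, qterm_succ. simpl Cpow.
  pose proof (z_minus_aq_neq0 _ _ _ _ H) as Nza.
  destruct H as [Ha Hq Hz Hq1 _ Hkz Hqa Hqk].
  pose proof (Hkz N) as K1. pose proof (Hkz (S N)) as K2.
  pose proof (Hqa N) as Q1. pose proof (Hqa (S N)) as Q2.
  pose proof (Hqk N) as R1. pose proof (Hqk (S N)) as R2.
  simpl Cpow in K2, Q2, R2.
  pose proof (one_minus_qpow_neq0 q N Hq1).
  set (x := q ^ N) in *. set (Ax := qterm a k z q N).
  field. repeat split; auto; neq0_scaled z.
Qed.

Lemma summand_telescope N :
  psum (summand a k z q) N - psum (summand (a * q) (k * q) z q) N =
  remainder a k z q N - remainder a k z q 0.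
Proof.
  induction N as [|N IH]; simpl psum; [simpl; ring|].
  transitivity ((psum (summand a k z q) N - psum (summand (a * q) (k * q) z q) N) +
                (summand a k z q (S N) - summand (a * q) (k * q) z q (S N))); [ring|].
  rewrite IH, summand_shift_diff. ring.
Qed.

End Telescoping.

Lemma remainder0_antisym a k z q :
  Admissible a k z q -> Admissible k a z q -> remainder a k z q 0 + remainder k a z q 0 = 0.
Proof.
  intros H1 H2.
  pose proof (z_minus_aq_neq0 _ _ _ _ H1). pose proof (z_minus_aq_neq0 _ _ _ _ H2).
  destruct H1 as [Ha Hq Hz _ _ Hkz Hqa Hqk]. destruct H2 as [Hk _ _ _ _ Haz _ _].
  specialize (Hkz 0%nat); specialize (Hqa 0%nat); specialize (Hqk 0%nat); specialize (Haz 0%nat).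
  simpl in *. unfold remainder, qterm. simpl.
  field. repeat split; auto; neq0_scaled z.
Qed.

Lemma Admissible_shift a k z q : Admissible a k z q -> Admissible (a * q) (k * q) z q.
Proof.
  intros [Ha Hq Hz Hq1 Hqa Hkz Hqa' Hqk]. constructor; auto.
  - apply Cmult_neq_0; auto.
  - rewrite !Cmod_mult in *. pose proof (Cmod_ge_0 q). pose proof (Cmod_ge_0 a).
    assert (0 <= Cmod q * Cmod a)%R by (apply Rmult_le_pos; lra).
    nra.
  - intros i. replace (q * (k * q) / z * q ^ i) with (q * k / z * q ^ S i) by (simpl; field; auto).
    apply Hkz.
  - intros i. replace (q * (a * q) * q ^ i) with (q * a * q ^ S i) by (simpl; ring). apply Hqa'.
  - intros i. replace (q * (k * q) * q ^ i) with (q * k * q ^ S i) by (simpl; ring). apply Hqk.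
Qed.

Lemma Admissible_pow a k z q m : Admissible a k z q -> Admissible (a * q ^ m) (k * q ^ m) z q.
Proof.
  intros H. induction m as [|m IH]; simpl.
  - rewrite !Cmult_1_r. exact H.
  - replace (a * (q * q ^ m)) with (a * q ^ m * q) by ring.
    replace (k * (q * q ^ m)) with (k * q ^ m * q) by ring.
    apply Admissible_shift; exact IH.
Qed.

Close Scope C_scope.
Open Scope R_scope.

(** * Estimates *)

Lemma geometric_eventually_lt K rho : 0 <= K -> 0 <= rho < 1 ->
  forall eps, eps > 0 -> exists N, forall n, (n >= N)%nat -> K * rho ^ n < eps.
Proof.
  intros HK Hr eps He.
  destruct (pow_lt_1_zero rho ltac:(rewrite Rabs_right; lra) (eps / (K + 1))) as [N HN].
  { apply Rdiv_lt_0_compat; lra. }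
  exists N. intros n Hn. specialize (HN n Hn).
  rewrite Rabs_right in HN by (apply Rle_ge, pow_le; lra).
  apply Rmult_lt_compat_r with (r := K + 1) in HN; [|lra].
  unfold Rdiv in HN. rewrite Rmult_assoc, Rinv_l in HN by lra.
  pose proof (pow_le rho n ltac:(lra)). nra.
Qed.

Lemma pow_le_1 r n : 0 <= r <= 1 -> r ^ n <= 1.
Proof. intros Hr. rewrite <- (pow1 n). apply pow_incr. exact Hr. Qed.

Lemma pow_le_base r n : 0 <= r <= 1 -> (1 <= n)%nat -> r ^ n <= r.
Proof.
  intros Hr Hn. destruct n as [|n]; [lia|]. simpl.
  pose proof (pow_le_1 r n Hr). pose proof (pow_le r n ltac:(lra)). nra.
Qed.

Lemma Cmod_sub_le (x y : C) : Cmod (x - y) <= Cmod x + Cmod y.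
Proof. unfold Cminus. eapply Rle_trans; [apply Cmod_triangle|]. rewrite Cmod_opp; lra. Qed.

Lemma Cmod_1_minus_le (w : C) : Cmod (1 - w) <= 1 + Cmod w.
Proof. rewrite <- Cmod_1 at 2. apply Cmod_sub_le. Qed.

Lemma Cmod_1_minus_ge (w : C) : 1 - Cmod w <= Cmod (1 - w).
Proof.
  pose proof (Cmod_triangle (1 - w) w) as H.
  replace (1 - w + w)%C with (RtoC 1) in H by ring. rewrite Cmod_1 in H. lra.
Qed.

Lemma pos_lower_bound_upto (f : nat -> R) N :
  (forall n, 0 < f n) -> exists c, 0 < c /\ forall n, (n <= N)%nat -> c <= f n.
Proof.
  intros Hf. induction N as [|N [c [Hc HN]]].
  - exists (f 0%nat). split; [apply Hf|]. intros n Hn. replace n with 0%nat by lia. lra.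
  - exists (Rmin c (f (S N))). split; [apply Rmin_pos; auto|].
    intros n Hn. destruct (Nat.eq_dec n (S N)) as [->|Hne]; [apply Rmin_r|].
    eapply Rle_trans; [apply Rmin_l | apply HN; lia].
Qed.

Lemma pow_shift_le rho r m n : 0 <= rho -> 0 <= r <= 1 -> (1 <= n)%nat ->
  (rho * r ^ m) ^ n <= r ^ m * rho ^ n.
Proof.
  intros Hrho Hr Hn. rewrite Rpow_mult_distr, Rmult_comm.
  apply Rmult_le_compat_r; [apply pow_le; lra|].
  apply pow_le_base; [split; [apply pow_le; lra | apply pow_le_1; lra] | exact Hn].
Qed.

Lemma div_le_bound (x y X c : R) : 0 <= x <= X -> 0 < c <= y -> x / y <= X / c.
Proof.
  intros Hx Hc. unfold Rdiv. apply Rmult_le_compat; try lra.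
  - left; apply Rinv_0_lt_compat; lra.
  - apply Rinv_le_contravar; lra.
Qed.

Ltac nonneg :=
  repeat (assumption || apply Rmult_le_pos || apply Rplus_le_le_0_compat ||
          apply Cmod_ge_0 || apply pow_le);
  try lra.

Section PochhammerBounds.
Variables x q : C.
Hypothesis Hq : Cmod q < 1.

Lemma qp_norm_le_partial n : Cmod (qp x q n) <= exp (Cmod x * (1 - Cmod q ^ n) / (1 - Cmod q)).
Proof.
  pose proof (Cmod_ge_0 q). pose proof (Cmod_ge_0 x).
  induction n as [|n IH]; simpl.
  - rewrite Cmod_1. replace (Cmod x * (1 - 1) / (1 - Cmod q)) with 0 by (field; lra).
    rewrite exp_0; lra.
  - rewrite Cmod_mult.
    replace (Cmod x * (1 - Cmod q * Cmod q ^ n) / (1 - Cmod q)) with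
      (Cmod x * (1 - Cmod q ^ n) / (1 - Cmod q) + Cmod x * Cmod q ^ n) by (field; lra).
    rewrite exp_plus.
    pose proof (Cmod_1_minus_le (x * q ^ n)) as H1. rewrite Cmod_mult, Cmod_pow in H1.
    pose proof (exp_ineq1_le (Cmod x * Cmod q ^ n)).
    apply Rmult_le_compat; try apply Cmod_ge_0; lra.
Qed.

Lemma qp_norm_le n : Cmod (qp x q n) <= exp (Cmod x / (1 - Cmod q)).
Proof.
  eapply Rle_trans; [apply qp_norm_le_partial|].
  pose proof (Cmod_ge_0 q). pose proof (Cmod_ge_0 x). pose proof (pow_le (Cmod q) n H).
  assert (Hle : Cmod x * (1 - Cmod q ^ n) / (1 - Cmod q) <= Cmod x / (1 - Cmod q)).
  { unfold Rdiv. apply Rmult_le_compat_r; [left; apply Rinv_0_lt_compat; lra | nra]. }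
  destruct (Rle_lt_or_eq_dec _ _ Hle) as [Hlt | ->]; [left; apply exp_increasing, Hlt | lra].
Qed.

Lemma qp_norm_ge_partial n : Cmod x <= (1 - Cmod q) / 2 ->
  1 - Cmod x * (1 - Cmod q ^ n) / (1 - Cmod q) <= Cmod (qp x q n).
Proof.
  intros Hx. pose proof (Cmod_ge_0 q). pose proof (Cmod_ge_0 x).
  induction n as [|n IH]; simpl.
  - rewrite Cmod_1. replace (Cmod x * (1 - 1) / (1 - Cmod q)) with 0 by (field; lra). lra.
  - rewrite Cmod_mult.
    pose proof (Cmod_1_minus_ge (x * q ^ n)) as H1. rewrite Cmod_mult, Cmod_pow in H1.
    pose proof (pow_le (Cmod q) n H). pose proof (pow_le_1 (Cmod q) n ltac:(lra)).
    set (r := Cmod q) in *. set (s := Cmod x * (1 - r ^ n) / (1 - r)) in *.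
    assert (Hs : 0 <= s <= 1/2).
    { unfold s. split; [apply Rdiv_le_0_compat; nra|].
      apply (Rmult_le_reg_r (1 - r)); [lra|].
      unfold Rdiv. rewrite Rmult_assoc, Rinv_l by lra. nra. }
    replace (Cmod x * (1 - r * r ^ n) / (1 - r)) with (s + Cmod x * r ^ n)
      by (unfold s; field; lra).
    assert (0 <= 1 - Cmod x * r ^ n) by nra.
    assert (0 <= s * (Cmod x * r ^ n)) by (apply Rmult_le_pos; nra).
    assert ((1 - s) * (1 - Cmod x * r ^ n) <= Cmod (qp x q n) * Cmod (1 - x * q ^ n))
      by (apply Rmult_le_compat; lra).
    nra.
Qed.

End PochhammerBounds.

Section PochhammerLowerBounds.
Variables x q : C.
Hypothesis Hq : Cmod q < 1.
Hypothesis Hx : forall i, (1 - x * q ^ i)%C <> 0%C.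

(* Beyond an index [i0] with [|x q^i0| <= (1-|q|)/2] the factors stay above 1/2;
   before [i0] there are finitely many nonzero values. *)
Lemma qp_norm_ge : exists c, 0 < c /\ forall n, c <= Cmod (qp x q n).
Proof.
  pose proof (Cmod_ge_0 q). pose proof (Cmod_ge_0 x).
  destruct (geometric_eventually_lt (Cmod x) (Cmod q) ltac:(lra) ltac:(lra) ((1 - Cmod q) / 2))
    as [i0 Hi0]; [lra|].
  specialize (Hi0 i0 (le_n _)).
  assert (Hhalf : forall p, 1/2 <= Cmod (qp (x * q ^ i0) q p)).
  { intros p. assert (Hsmall : Cmod (x * q ^ i0)%C <= (1 - Cmod q) / 2)
      by (rewrite Cmod_mult, Cmod_pow; lra).
    eapply Rle_trans; [|apply qp_norm_ge_partial; auto].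
    pose proof (pow_le (Cmod q) p H). pose proof (pow_le_1 (Cmod q) p ltac:(lra)).
    pose proof (Cmod_ge_0 (x * q ^ i0)%C).
    assert (Cmod (x * q ^ i0)%C * (1 - Cmod q ^ p) / (1 - Cmod q) <= 1/2); [|lra].
    apply (Rmult_le_reg_r (1 - Cmod q)); [lra|].
    unfold Rdiv. rewrite Rmult_assoc, Rinv_l by lra. nra. }
  assert (Hpos : forall n, 0 < Cmod (qp x q n)) by (intros n; apply Cmod_gt_0, qp_neq0, Hx).
  destruct (pos_lower_bound_upto _ i0 Hpos) as [c [Hc Hcn]].
  exists (Rmin c (Cmod (qp x q i0) / 2)).
  split; [apply Rmin_pos; [lra | specialize (Hpos i0); lra]|].
  intros n. destruct (Nat.le_gt_cases n i0).
  - eapply Rle_trans; [apply Rmin_l | auto].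
  - eapply Rle_trans; [apply Rmin_r|].
    replace n with (i0 + (n - i0))%nat by lia. rewrite qp_add, Cmod_mult.
    specialize (Hhalf (n - i0)%nat). specialize (Hpos i0). nra.
Qed.

(* Uniform in the starting index [m], because [qp x q (m + n) = qp x q m * qp (x q^m) q n]
   and [|qp x q m|] is bounded above. *)
Lemma qp_tail_norm_ge : exists c, 0 < c /\ forall m n, c <= Cmod (qp (x * q ^ m) q n).
Proof.
  destruct qp_norm_ge as [c0 [Hc0 Hlow]].
  set (E := exp (Cmod x / (1 - Cmod q))).
  assert (HE : 0 < E) by apply exp_pos.
  exists (c0 / E). split; [apply Rdiv_lt_0_compat; auto|].
  intros m n. specialize (Hlow (m + n)%nat). rewrite qp_add, Cmod_mult in Hlow.
  assert (Hup : Cmod (qp x q m) <= E) by apply qp_norm_le, Hq.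
  pose proof (Cmod_ge_0 (qp x q m)). pose proof (Cmod_ge_0 (qp (x * q ^ m) q n)).
  apply (Rmult_le_reg_l E); [exact HE|].
  replace (E * (c0 / E)) with c0 by (field; lra). nra.
Qed.

Lemma qp_factor_norm_ge : exists c, 0 < c /\ forall j, c <= Cmod (1 - x * q ^ j)%C.
Proof.
  destruct qp_tail_norm_ge as [c [Hc Hb]]. exists c. split; auto.
  intros j. specialize (Hb j 1%nat). simpl in Hb.
  replace (1 * (1 - x * q ^ j * 1))%C with (1 - x * q ^ j)%C in Hb by ring. exact Hb.
Qed.

End PochhammerLowerBounds.

Definition term_ratio (a z q : C) : R := Cmod (q * a)%C / Cmod z.

Lemma term_ratio_bounds a k z q : Admissible a k z q -> 0 <= term_ratio a z q < 1.
Proof.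
  intros [_ _ Hz _ Hqa _ _ _]. unfold term_ratio.
  pose proof (proj1 (Cmod_gt_0 z) Hz).
  split; [apply Rdiv_le_0_compat; [apply Cmod_ge_0 | lra]|].
  apply (Rmult_lt_reg_r (Cmod z)); auto.
  unfold Rdiv. rewrite Rmult_assoc, Rinv_l by lra. lra.
Qed.

Lemma qterm_pow_shift (a k z q : C) m n : a <> 0%C -> q <> 0%C -> z <> 0%C ->
  qterm (a * q ^ m) (k * q ^ m) z q n =
  (qp z q n * qp (k / a) q n * (q * a / z * q ^ m) ^ n /
    (qp (q * k / z * q ^ m) q n * qp (q * a * q ^ m) q n))%C.
Proof.
  intros Ha Hq Hz. assert (Hqm : (q ^ m)%C <> 0%C) by exact (Cpow_nz q m Hq).
  unfold qterm.
  replace (k * q ^ m / (a * q ^ m))%C with (k / a)%C by (field; auto).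
  replace (q * (k * q ^ m) / z)%C with (q * k / z * q ^ m)%C by (field; auto).
  replace (q * (a * q ^ m) / z)%C with (q * a / z * q ^ m)%C by (field; auto).
  replace (q * (a * q ^ m))%C with (q * a * q ^ m)%C by ring.
  reflexivity.
Qed.

Lemma qp_pow_shift_neq0 (x q : C) m n :
  (forall i, (1 - x * q ^ i)%C <> 0%C) -> qp (x * q ^ m) q n <> 0%C.
Proof.
  intros Hx. apply qp_neq0. intros i.
  replace (x * q ^ m * q ^ i)%C with (x * q ^ (m + i))%C by (rewrite Cpow_add_r; ring).
  apply Hx.
Qed.

Lemma qterm_bound a k z q : Admissible a k z q ->
  exists K, 0 <= K /\ forall m n,
    Cmod (qterm (a * q ^ m) (k * q ^ m) z q n) <= K * (term_ratio a z q * Cmod q ^ m) ^ n.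
Proof.
  intros H. pose proof (term_ratio_bounds _ _ _ _ H) as Hrho.
  destruct H as [Ha Hq Hz Hq1 _ Hkz Hqa _].
  destruct (qp_tail_norm_ge _ _ Hq1 Hkz) as [c1 [Hc1 Hb1]].
  destruct (qp_tail_norm_ge _ _ Hq1 Hqa) as [c2 [Hc2 Hb2]].
  set (Ez := exp (Cmod z / (1 - Cmod q))). set (Eka := exp (Cmod (k / a)%C / (1 - Cmod q))).
  assert (0 < Ez) by apply exp_pos. assert (0 < Eka) by apply exp_pos.
  exists (Ez * Eka / (c1 * c2)). split; [apply Rdiv_le_0_compat; nra|].
  intros m n. rewrite qterm_pow_shift by auto.
  pose proof (qp_pow_shift_neq0 _ _ m n Hkz). pose proof (qp_pow_shift_neq0 _ _ m n Hqa).
  rewrite Cmod_div by (apply Cmult_neq_0; auto).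
  rewrite !Cmod_mult, !Cmod_pow, !Cmod_mult, Cmod_div, Cmod_pow by auto.
  change (Cmod (q * a)%C / Cmod z) with (term_ratio a z q).
  assert (HW : 0 <= (term_ratio a z q * Cmod q ^ m) ^ n)
    by (apply pow_le, Rmult_le_pos; [lra | apply pow_le, Cmod_ge_0]).
  set (W := (term_ratio a z q * Cmod q ^ m) ^ n) in *.
  apply Rle_trans with (Ez * Eka * W / (c1 * c2)); [| right; field; lra].
  apply div_le_bound.
  - split; [nonneg|].
    apply Rmult_le_compat_r; auto.
    apply Rmult_le_compat; try apply Cmod_ge_0; apply qp_norm_le, Hq1.
  - specialize (Hb1 m n). specialize (Hb2 m n). split; [nra|].
    apply Rmult_le_compat; lra.
Qed.

Lemma summand_bound a k z q : Admissible a k z q ->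
  exists B, 0 <= B /\ forall m n, (1 <= n)%nat ->
    Cmod (summand (a * q ^ m) (k * q ^ m) z q n) <= B * Cmod q ^ m * term_ratio a z q ^ n.
Proof.
  intros H. destruct (qterm_bound a k z q H) as [K [HK HA]].
  pose proof (term_ratio_bounds a k z q H) as Hrho.
  destruct H as [_ _ _ Hq1 _ _ _ Hqk].
  destruct (qp_factor_norm_ge _ _ Hq1 Hqk) as [c [Hc Hcb]].
  pose proof (Cmod_ge_0 q) as Hr0. pose proof (Cmod_ge_0 k) as Hk0.
  exists ((1 + Cmod k) * K / (c * (1 - Cmod q))). split; [apply Rdiv_le_0_compat; nra|].
  intros m [|n] Hn; [lia|]. unfold summand.
  replace (k * q ^ m * q ^ S n)%C with (q * k * q ^ (m + n))%C by (rewrite Cpow_add_r; simpl; ring).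
  specialize (Hcb (m + n)%nat).
  assert (N1 : (1 - q * k * q ^ (m + n))%C <> 0%C) by (intro E; rewrite E, Cmod_0 in Hcb; lra).
  pose proof (one_minus_qpow_neq0 q n Hq1) as N2.
  rewrite Cmod_div, !Cmod_mult by (apply Cmult_neq_0; auto).
  set (r := Cmod q) in *.
  assert (Hnum : Cmod (1 - q * k * q ^ (m + n) * q ^ S n)%C <= 1 + Cmod k).
  { eapply Rle_trans; [apply Cmod_1_minus_le|]. rewrite !Cmod_mult, !Cmod_pow. fold r.
    assert (r * r ^ (m + n) * r ^ S n <= 1)
      by (replace (r * r ^ (m + n) * r ^ S n) with (r ^ (S (m + n) + S n))
            by (rewrite pow_add; simpl; ring); apply pow_le_1; lra).
    assert (0 <= r * r ^ (m + n) * r ^ S n) by nonneg. nra. }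
  assert (Hden : 1 - r <= Cmod (1 - q ^ S n)%C).
  { eapply Rle_trans; [|apply Cmod_1_minus_ge]. rewrite Cmod_pow. fold r.
    pose proof (pow_le_base r (S n) ltac:(lra) ltac:(lia)). lra. }
  assert (HAb : Cmod (qterm (a * q ^ m) (k * q ^ m) z q (S n)) <=
                K * r ^ m * term_ratio a z q ^ S n).
  { rewrite Rmult_assoc. eapply Rle_trans; [apply HA|].
    apply Rmult_le_compat_l; [lra | apply pow_shift_le; lra || lia]. }
  apply Rle_trans with ((1 + Cmod k) * (K * r ^ m * term_ratio a z q ^ S n) / (c * (1 - r)));
    [| right; field; lra].
  apply div_le_bound.
  - split; [nonneg | apply Rmult_le_compat; try apply Cmod_ge_0; lra].
  - split; [nra | apply Rmult_le_compat; lra].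
Qed.

Lemma remainder_bound a k z q : Admissible a k z q ->
  exists C, 0 <= C /\ forall n, Cmod (remainder a k z q n) <= C * term_ratio a z q ^ n.
Proof.
  intros H. destruct (qterm_bound a k z q H) as [K [HK HA]].
  pose proof (term_ratio_bounds a k z q H) as Hrho.
  pose proof (proj1 (Cmod_gt_0 _) (z_minus_aq_neq0 _ _ _ _ H)) as Hzaq.
  destruct H as [Ha Hq Hz Hq1 _ Hkz Hqa Hqk].
  destruct (qp_factor_norm_ge _ _ Hq1 Hkz) as [c1 [Hc1 Hb1]].
  destruct (qp_factor_norm_ge _ _ Hq1 Hqa) as [c2 [Hc2 Hb2]].
  destruct (qp_factor_norm_ge _ _ Hq1 Hqk) as [c3 [Hc3 Hb3]].
  pose proof (proj1 (Cmod_gt_0 z) Hz).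
  set (r := Cmod q) in *. assert (Hr0 : 0 <= r) by apply Cmod_ge_0.
  set (Nb := r * (Cmod z + 1) * (Cmod a + Cmod k) * (Cmod z + Cmod a * Cmod k * r * r)).
  set (Db := Cmod z * Cmod (z - a * q)%C * c3 * c2 * c1).
  assert (HNb : 0 <= Nb) by (unfold Nb; nonneg).
  assert (HDb : 0 < Db) by (unfold Db; repeat apply Rmult_lt_0_compat; lra).
  exists (K * Nb / Db). split; [apply Rdiv_le_0_compat; nra|]. intros n.
  specialize (Hb1 n); specialize (Hb2 n); specialize (Hb3 n).
  specialize (HA 0%nat n). rewrite Rmult_1_r in HA. simpl in HA. rewrite !Cmult_1_r in HA.
  assert (Hrn : r ^ n <= 1) by (apply pow_le_1; lra). pose proof (pow_le r n Hr0).
  unfold remainder.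
  replace (k * q * q ^ n)%C with (q * k * q ^ n)%C by ring.
  replace (a * q * q ^ n)%C with (q * a * q ^ n)%C by ring.
  replace (q * k * q ^ n / z)%C with (q * k / z * q ^ n)%C by (field; auto).
  assert (Hnz : forall w, 0 < Cmod w -> w <> 0%C) by (intros w Hw E; rewrite E, Cmod_0 in Hw; lra).
  rewrite Cmod_div by (repeat apply Cmult_neq_0; apply Hnz; lra).
  rewrite !Cmod_mult.
  apply Rle_trans with ((K * term_ratio a z q ^ n) * r * (Cmod z + 1) * (Cmod a + Cmod k) *
                        (Cmod z + Cmod a * Cmod k * r * r) / Db); [| right; unfold Nb; field; lra].
  pose proof (Cmod_ge_0 k). assert (0 <= Cmod a * Cmod k * r * r) by nonneg.
  apply div_le_bound; split; [nonneg | | lra | ].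
  - rewrite <- !Rmult_assoc.
    repeat apply Rmult_le_compat; try nonneg; try lra; [unfold r; lra | ..];
      eapply Rle_trans; try apply Cmod_sub_le; rewrite ?Cmod_mult, ?Cmod_pow, ?Cmod_1; fold r; nra.
  - unfold Db. repeat apply Rmult_le_compat; try nonneg; lra.
Qed.

Lemma remainder_tends_to_0 a k z q : Admissible a k z q ->
  forall eps, eps > 0 -> exists N, forall n, (n >= N)%nat -> Cmod (remainder a k z q n) < eps.
Proof.
  intros H eps He. destruct (remainder_bound a k z q H) as [C [HC Hb]].
  destruct (geometric_eventually_lt C _ HC (term_ratio_bounds _ _ _ _ H) eps He) as [N HN].
  exists N. intros n Hn. eapply Rle_lt_trans; [apply Hb | apply HN, Hn].
Qed.

Definition cv_series (u : nat -> C) (L : C) : Prop :=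
  forall eps, eps > 0 -> exists N, forall M, (M >= N)%nat -> Cmod (psum u M - L) < eps.

Lemma Cmod_arbitrarily_small (x : C) : (forall eps, eps > 0 -> Cmod x < eps) -> x = 0%C.
Proof.
  intros H. apply Cmod_eq_0.
  destruct (Rle_lt_or_eq_dec 0 (Cmod x) (Cmod_ge_0 x)) as [Hl|He]; auto.
  specialize (H (Cmod x) Hl). lra.
Qed.

Lemma cv_series_unique u L1 L2 : cv_series u L1 -> cv_series u L2 -> L1 = L2.
Proof.
  intros H1 H2. apply Ceq_minus, Cmod_arbitrarily_small. intros eps He.
  destruct (H1 (eps/2)) as [N1 HN1]; [lra|]. destruct (H2 (eps/2)) as [N2 HN2]; [lra|].
  specialize (HN1 (max N1 N2) ltac:(lia)). specialize (HN2 (max N1 N2) ltac:(lia)).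
  replace (L1 - L2)%C with ((psum u (max N1 N2) - L2) - (psum u (max N1 N2) - L1))%C by ring.
  eapply Rle_lt_trans; [apply Cmod_sub_le | lra].
Qed.

Lemma cv_series_norm_le u L b : cv_series u L -> (forall n, Cmod (psum u n) <= b) -> Cmod L <= b.
Proof.
  intros H Hb. apply Rnot_lt_le. intros Hlt.
  destruct (H (Cmod L - b)) as [N HN]; [lra|]. specialize (HN N (le_n N)). specialize (Hb N).
  pose proof (Cmod_sub_le (psum u N) (psum u N - L)) as Htri.
  replace (psum u N - (psum u N - L))%C with L in Htri by ring. lra.
Qed.

Lemma Cmod_le_Rabs_fst_snd (x : C) : Cmod x <= Rabs (fst x) + Rabs (snd x).
Proof.
  pose proof (Rabs_pos (fst x)). pose proof (Rabs_pos (snd x)).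
  unfold Cmod. rewrite <- (sqrt_pow2 (Rabs (fst x) + Rabs (snd x))) by lra.
  apply sqrt_le_1_alt. rewrite <- (pow2_abs (fst x)), <- (pow2_abs (snd x)). nra.
Qed.

Lemma C_Cauchy_cv (v : nat -> C) :
  (forall eps, eps > 0 -> exists N, forall n m, (n >= N)%nat -> (m >= N)%nat ->
     Cmod (v m - v n) < eps) ->
  exists L, forall eps, eps > 0 -> exists N, forall n, (n >= N)%nat -> Cmod (v n - L) < eps.
Proof.
  intros HC.
  assert (Hcomp : forall pr : C -> R, (forall x, Rabs (pr x) <= Cmod x) ->
                    (forall x y, pr (x - y)%C = pr x - pr y) -> Cauchy_crit (fun n => pr (v n))).
  { intros pr Hpr Hlin eps He. destruct (HC eps He) as [N HN]. exists N. intros n m Hn Hm.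
    unfold Rdist. rewrite <- Hlin. eapply Rle_lt_trans; [apply Hpr | apply HN; auto]. }
  destruct (Rcomplete.R_complete _ (Hcomp fst (fun x => Rle_trans _ _ _ (Rmax_l _ _) (Rmax_Cmod x))
                                  (fun x y => eq_refl))) as [lr Hlr].
  destruct (Rcomplete.R_complete _ (Hcomp snd (fun x => Rle_trans _ _ _ (Rmax_r _ _) (Rmax_Cmod x))
                                  (fun x y => eq_refl))) as [li Hli].
  exists (lr, li). intros eps He.
  destruct (Hlr (eps/2)) as [N1 H1]; [lra|]. destruct (Hli (eps/2)) as [N2 H2]; [lra|].
  exists (max N1 N2). intros n Hn. eapply Rle_lt_trans; [apply Cmod_le_Rabs_fst_snd|].
  specialize (H1 n ltac:(lia)). specialize (H2 n ltac:(lia)). unfold Rdist in *.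
  replace (fst (v n - (lr, li))%C) with (fst (v n) - lr) by (simpl; ring).
  replace (snd (v n - (lr, li))%C) with (snd (v n) - li) by (simpl; ring). lra.
Qed.

Section GeometricMajorant.
Variables (u : nat -> C) (B rho : R).
Hypotheses (HB : 0 <= B) (Hrho : 0 <= rho < 1).
Hypothesis Hu : forall n, (1 <= n)%nat -> Cmod (u n) <= B * rho ^ n.

Lemma psum_diff_le n p :
  Cmod (psum u (n + p) - psum u n) <= B / (1 - rho) * (rho ^ S n - rho ^ S (n + p)).
Proof.
  induction p as [|p IH].
  - rewrite Nat.add_0_r. replace (psum u n - psum u n)%C with (RtoC 0) by ring. rewrite Cmod_0. lra.
  - rewrite Nat.add_succ_r. simpl psum.
    replace (psum u (n + p) + u (S (n + p)) - psum u n)%C with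
      ((psum u (n + p) - psum u n) + u (S (n + p)))%C by ring.
    eapply Rle_trans; [apply Cmod_triangle|].
    pose proof (Hu (S (n + p)) ltac:(lia)).
    replace (B / (1 - rho) * (rho ^ S n - rho ^ S (S (n + p)))) with
      (B / (1 - rho) * (rho ^ S n - rho ^ S (n + p)) + B * rho ^ S (n + p))
      by (simpl; field; lra).
    lra.
Qed.

Lemma psum_diff_le_tail n m :
  (n <= m)%nat -> Cmod (psum u m - psum u n) <= B / (1 - rho) * rho ^ S n.
Proof.
  intros Hnm. replace m with (n + (m - n))%nat by lia.
  eapply Rle_trans; [apply psum_diff_le|].
  assert (0 <= B / (1 - rho)) by (apply Rdiv_le_0_compat; lra).
  pose proof (pow_le rho (S (n + (m - n))) ltac:(lra)). nra.
Qed.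

Lemma cv_series_geometric : exists L, cv_series u L /\ Cmod L <= B * rho / (1 - rho).
Proof.
  assert (HK : 0 <= B / (1 - rho)) by (apply Rdiv_le_0_compat; lra).
  destruct (C_Cauchy_cv (psum u)) as [L HL].
  - intros eps He. destruct (geometric_eventually_lt _ _ HK Hrho eps He) as [N HN].
    exists N. intros n m Hn Hm. destruct (Nat.le_ge_cases n m) as [Hnm | Hmn].
    + eapply Rle_lt_trans; [apply psum_diff_le_tail, Hnm | apply HN; lia].
    + rewrite <- Cmod_opp, Copp_minus_distr.
      eapply Rle_lt_trans; [apply psum_diff_le_tail, Hmn | apply HN; lia].
  - exists L. split; [exact HL|]. apply (cv_series_norm_le u); [exact HL|]. intros n.
    replace (psum u n) with (psum u n - psum u 0)%C by (simpl; ring).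
    replace (B * rho / (1 - rho)) with (B / (1 - rho) * rho ^ 1) by (field; lra).
    apply psum_diff_le_tail. lia.
Qed.

End GeometricMajorant.

Lemma psum_ext (u v : nat -> C) N : (forall n, (1 <= n)%nat -> u n = v n) -> psum u N = psum v N.
Proof.
  intros H. induction N as [|N IH]; simpl; [reflexivity | rewrite IH, H by lia; reflexivity].
Qed.

Lemma cv_series_zero (u : nat -> C) : (forall n, (1 <= n)%nat -> u n = 0%C) -> cv_series u 0.
Proof.
  intros H eps He. exists 0%nat. intros M _.
  rewrite (psum_ext u (fun _ => 0%C) M H).
  assert (H0 : psum (fun _ => 0%C) M = 0%C)
    by (induction M as [|M IH]; simpl; [reflexivity | rewrite IH; ring]).
  rewrite H0. replace (0 - 0)%C with (RtoC 0) by ring. rewrite Cmod_0. lra.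
Qed.

Lemma psum_plus u v N : psum (fun n => u n + v n)%C N = (psum u N + psum v N)%C.
Proof. induction N as [|N IH]; simpl; [ring | rewrite IH; ring]. Qed.

Lemma cv_series_plus u v L M :
  cv_series u L -> cv_series v M -> cv_series (fun n => u n + v n)%C (L + M).
Proof.
  intros Hu Hv eps He.
  destruct (Hu (eps/2)) as [N1 H1]; [lra|]. destruct (Hv (eps/2)) as [N2 H2]; [lra|].
  exists (max N1 N2). intros n Hn. rewrite psum_plus.
  replace (psum u n + psum v n - (L + M))%C with ((psum u n - L) + (psum v n - M))%C by ring.
  specialize (H1 n ltac:(lia)). specialize (H2 n ltac:(lia)).
  eapply Rle_lt_trans; [apply Cmod_triangle | lra].
Qed.

Lemma cv_series_eq_of_psum_close u v L M : cv_series u L -> cv_series v M ->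
  (forall eps, eps > 0 -> exists N, forall n, (n >= N)%nat -> Cmod (psum u n - psum v n) < eps) ->
  L = M.
Proof.
  intros Hu Hv Huv. apply Ceq_minus, Cmod_arbitrarily_small. intros eps He.
  destruct (Hu (eps/3)) as [N1 H1]; [lra|]. destruct (Hv (eps/3)) as [N2 H2]; [lra|].
  destruct (Huv (eps/3)) as [N3 H3]; [lra|].
  set (n := max N1 (max N2 N3)).
  specialize (H1 n ltac:(lia)). specialize (H2 n ltac:(lia)). specialize (H3 n ltac:(lia)).
  replace (L - M)%C with ((psum u n - psum v n) - (psum u n - L) + (psum v n - M))%C by ring.
  eapply Rle_lt_trans; [apply Cmod_triangle|].
  pose proof (Cmod_sub_le (psum u n - psum v n) (psum u n - L)).
  lra.
Qed.

Lemma pair_sum_shift a k z q : Admissible a k z q -> Admissible k a z q ->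
  forall L1 L2 L3 L4,
  cv_series (summand a k z q) L1 -> cv_series (summand k a z q) L2 ->
  cv_series (summand (a * q) (k * q) z q) L3 -> cv_series (summand (k * q) (a * q) z q) L4 ->
  (L1 + L2 = L3 + L4)%C.
Proof.
  intros H1 H2 L1 L2 L3 L4 C1 C2 C3 C4.
  apply (cv_series_eq_of_psum_close _ _ _ _ (cv_series_plus _ _ _ _ C1 C2)
                                            (cv_series_plus _ _ _ _ C3 C4)).
  intros eps He.
  destruct (remainder_tends_to_0 a k z q H1 (eps/2)) as [N1 HN1]; [lra|].
  destruct (remainder_tends_to_0 k a z q H2 (eps/2)) as [N2 HN2]; [lra|].
  exists (max N1 N2). intros n Hn. rewrite !psum_plus.
  specialize (HN1 n ltac:(lia)). specialize (HN2 n ltac:(lia)).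
  pose proof (summand_telescope a k z q H1 n) as E1.
  pose proof (summand_telescope k a z q H2 n) as E2.
  pose proof (remainder0_antisym a k z q H1 H2) as E0.
  replace (psum (summand a k z q) n + psum (summand k a z q) n -
           (psum (summand (a * q) (k * q) z q) n + psum (summand (k * q) (a * q) z q) n))%C
    with (remainder a k z q n + remainder k a z q n)%C.
  - eapply Rle_lt_trans; [apply Cmod_triangle | lra].
  - transitivity ((remainder a k z q n - remainder a k z q 0) +
                  (remainder k a z q n - remainder k a z q 0)
                  + (remainder a k z q 0 + remainder k a z q 0))%C; [ring|].
    rewrite <- E1, <- E2, E0. ring.
Qed.

Lemma summand_series_small a k z q : Admissible a k z q ->
  exists D, 0 <= D /\ forall m, exists L,
    cv_series (summand (a * q ^ m) (k * q ^ m) z q) L /\ Cmod L <= D * Cmod q ^ m.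
Proof.
  intros H. destruct (summand_bound a k z q H) as [B [HB Hb]].
  pose proof (term_ratio_bounds a k z q H) as Hrho.
  exists (B * term_ratio a z q / (1 - term_ratio a z q)). split; [apply Rdiv_le_0_compat; nra|].
  intros m. pose proof (pow_le (Cmod q) m (Cmod_ge_0 q)).
  destruct (cv_series_geometric _ (B * Cmod q ^ m) _ ltac:(nra) Hrho (Hb m)) as [L [HL HLb]].
  exists L. split; [exact HL|]. eapply Rle_trans; [exact HLb | right; field; lra].
Qed.

Lemma pair_sum_pow_shift a k z q : Admissible a k z q -> Admissible k a z q ->
  forall L1 L2, cv_series (summand a k z q) L1 -> cv_series (summand k a z q) L2 ->
  forall m Lm Lm', cv_series (summand (a * q ^ m) (k * q ^ m) z q) Lm ->
  cv_series (summand (k * q ^ m) (a * q ^ m) z q) Lm' -> (L1 + L2 = Lm + Lm')%C.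
Proof.
  intros H1 H2 L1 L2 C1 C2 m. induction m as [|m IH]; intros Lm Lm' Cm Cm'.
  - simpl in Cm, Cm'. rewrite !Cmult_1_r in Cm, Cm'.
    rewrite (cv_series_unique _ _ _ C1 Cm), (cv_series_unique _ _ _ C2 Cm'). reflexivity.
  - destruct (summand_series_small a k z q H1) as [D1 [_ Ex1]].
    destruct (summand_series_small k a z q H2) as [D2 [_ Ex2]].
    destruct (Ex1 m) as [M1 [HM1 _]]. destruct (Ex2 m) as [M2 [HM2 _]].
    rewrite (IH M1 M2 HM1 HM2).
    replace (a * q ^ S m)%C with (a * q ^ m * q)%C in Cm, Cm' by (simpl; ring).
    replace (k * q ^ S m)%C with (k * q ^ m * q)%C in Cm, Cm' by (simpl; ring).
    apply (pair_sum_shift (a * q ^ m) (k * q ^ m) z q); auto using Admissible_pow.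
Qed.

Theorem summand_series_antisym a k z q : Admissible a k z q -> Admissible k a z q ->
  exists L, cv_series (summand a k z q) L /\ cv_series (summand k a z q) (- L)%C.
Proof.
  intros H1 H2.
  destruct (summand_series_small a k z q H1) as [D1 [HD1 Ex1]].
  destruct (summand_series_small k a z q H2) as [D2 [HD2 Ex2]].
  destruct (Ex1 0%nat) as [L1 [C1 _]]. destruct (Ex2 0%nat) as [L2 [C2 _]].
  simpl in C1, C2. rewrite !Cmult_1_r in C1, C2.
  assert (Hsum : (L1 + L2)%C = 0%C).
  { apply Cmod_arbitrarily_small. intros eps He.
    pose proof (adm_q_lt_1 _ _ _ _ H1). pose proof (Cmod_ge_0 q).
    destruct (geometric_eventually_lt (D1 + D2) (Cmod q) ltac:(lra) ltac:(lra) eps He) as [m Hm].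
    destruct (Ex1 m) as [M1 [HM1 HB1]]. destruct (Ex2 m) as [M2 [HM2 HB2]].
    rewrite (pair_sum_pow_shift a k z q H1 H2 L1 L2 C1 C2 m M1 M2 HM1 HM2).
    specialize (Hm m (le_n m)).
    eapply Rle_lt_trans; [apply Cmod_triangle | lra]. }
  exists L1. split; [exact C1|].
  replace (- L1)%C with L2 by (apply Ceq_minus; rewrite <- Hsum; ring). exact C2.
Qed.

Lemma summand_q0 a k z n : (1 <= n)%nat -> summand a k z 0 n = 0%C.
Proof.
  intros Hn. destruct n as [|n]; [lia|]. unfold summand, qterm.
  replace (RtoC 0 * a / z)%C with (RtoC 0) by (unfold Cdiv; ring).
  rewrite Cpow_S. unfold Cdiv. ring.
Qed.

(** * Transfer to [Cplx] *)

Import Defs.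

Definition toC (x : Cplx) : C := (Re x, Im x).

Lemma toC_add x y : toC (Cadd x y) = (toC x + toC y)%C.
Proof. reflexivity. Qed.
Lemma toC_opp x : toC (Copp x) = (- toC x)%C.
Proof. reflexivity. Qed.
Lemma toC_sub x y : toC (Csub x y) = (toC x - toC y)%C.
Proof. reflexivity. Qed.
Lemma toC_mul x y : toC (Cmul x y) = (toC x * toC y)%C.
Proof. reflexivity. Qed.
Lemma toC_C0 : toC C0 = RtoC 0.
Proof. reflexivity. Qed.
Lemma toC_C1 : toC C1 = RtoC 1.
Proof. reflexivity. Qed.
Lemma toC_div x y : toC (Cdiv x y) = (toC x / toC y)%C.
Proof.
  unfold toC, Cdiv, Cinv, Complex.Cdiv, Complex.Cinv. simpl. rewrite !Rmult_1_r. reflexivity.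
Qed.
Lemma toC_pow x n : toC (Cpow x n) = (toC x ^ n)%C.
Proof. induction n as [|n IH]; simpl; [reflexivity | rewrite toC_mul, IH; reflexivity]. Qed.
Lemma toC_qpoch x q n : toC (qpoch x q n) = qp (toC x) (toC q) n.
Proof.
  induction n as [|n IH]; simpl; [reflexivity|].
  rewrite toC_mul, toC_sub, toC_C1, toC_mul, toC_pow, IH. reflexivity.
Qed.

Hint Rewrite toC_add toC_opp toC_sub toC_mul toC_C0 toC_C1 toC_div toC_pow toC_qpoch : toC.

Lemma Cnorm_toC x : Cnorm x = Cmod (toC x).
Proof. unfold Cnorm, Cmod, toC. simpl. rewrite !Rmult_1_r. reflexivity. Qed.

Lemma toC_neq0 x : x <> C0 -> toC x <> RtoC 0.
Proof. destruct x as [xr xi]. intros H E. apply H. injection E as -> ->. reflexivity. Qed.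

Lemma toC_psum1 u N : toC (psum1 u N) = psum (fun n => toC (u n)) N.
Proof. induction N as [|N IH]; simpl; [reflexivity | rewrite toC_add, IH; reflexivity]. Qed.

Lemma series1_cv_toC (u : nat -> Cplx) L v :
  (forall n, (1 <= n)%nat -> toC (u n) = v n) -> cv_series v (toC L) -> series1_cv u L.
Proof.
  intros Huv H eps He. destruct (H eps He) as [N HN]. exists N. intros M HM.
  rewrite Cnorm_toC, toC_sub, toC_psum1, (psum_ext _ v M Huv). apply HN, HM.
Qed.

Lemma toC_f_den a k z q s n :
  toC (f_den a k z q s n) =
  (qp (toC s) (toC q) n * qp (- toC s) (toC q) n * qp (toC q * toC k) (toC q) n *
   qp (toC q * toC k / toC z) (toC q) n * qp (toC q * toC a) (toC q) n * (1 - toC q ^ n))%C.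
Proof. unfold f_den. autorewrite with toC. reflexivity. Qed.

Open Scope C_scope.

(* [(q s, -q s; q)_n / (s, -s; q)_n = (1 - s^2 q^2n) / (1 - s^2)] and
   [(s^2; q)_n / (q s^2; q)_n = (1 - s^2) / (1 - s^2 q^n)]. *)
Lemma toC_f_term a k z q s n : Cmul s s = k -> f_denoms_ok a k z q s -> (1 <= n)%nat ->
  toC (f_term a k z q s n) = summand (toC a) (toC k) (toC z) (toC q) n.
Proof.
  intros Hs [Ha [Hz Hden]] Hn. subst k. specialize (Hden n Hn).
  apply toC_neq0 in Ha, Hz, Hden. rewrite toC_f_den in Hden.
  unfold f_term, f_num, f_den. autorewrite with toC.
  set (S := toC s) in *. set (Q := toC q) in *.
  apply Cmult_neq_0_inv in Hden as [Hden D6]. apply Cmult_neq_0_inv in Hden as [Hden D5].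
  apply Cmult_neq_0_inv in Hden as [Hden D4]. apply Cmult_neq_0_inv in Hden as [Hden D3].
  apply Cmult_neq_0_inv in Hden as [D1 D2].
  assert (F1 : 1 - S <> 0)
    by (pose proof (qp_factor_neq0 _ _ _ 0 Hn D1); rewrite Cmult_1_r in *; auto).
  assert (F2 : 1 - - S <> 0)
    by (pose proof (qp_factor_neq0 _ _ _ 0 Hn D2); rewrite Cmult_1_r in *; auto).
  assert (F3 : 1 - S * S * Q ^ n <> 0).
  { destruct n as [|n]; [lia|]. pose proof (qp_factor_neq0 _ _ _ n (Nat.lt_succ_diag_r n) D3).
    rewrite Cpow_S. replace (S * S * (Q * Q ^ n)) with (Q * (S * S) * Q ^ n) by ring. auto. }
  assert (F4 : 1 - S * S <> 0)
    by (replace (1 - S * S) with ((1 - S) * (1 - - S)) by ring; apply Cmult_neq_0; auto).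
  assert (E1 : qp (Q * S) Q n * qp (- (Q * S)) Q n =
               qp S Q n * qp (- S) Q n * (1 - S * S * Q ^ n * Q ^ n) / (1 - S * S)).
  { replace (- (Q * S)) with (- S * Q) by ring. rewrite (Cmult_comm Q S).
    assert (E : qp (S * Q) Q n * qp (- S * Q) Q n * (1 - S * S) =
                qp S Q n * qp (- S) Q n * (1 - S * S * Q ^ n * Q ^ n)).
    { transitivity (qp (S * Q) Q n * (1 - S) * (qp (- S * Q) Q n * (1 - - S))); [ring|].
      rewrite !qp_shift. ring. }
    rewrite <- E. field. exact F4. }
  assert (E2 : qp (S * S) Q n = (1 - S * S) * qp (Q * (S * S)) Q n / (1 - S * S * Q ^ n)).
  { replace ((1 - S * S) * qp (Q * (S * S)) Q n) with (qp (S * S * Q) Q n * (1 - S * S))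
      by (rewrite (Cmult_comm Q); ring).
    rewrite qp_shift. field. exact F3. }
  rewrite E1, E2. unfold summand, qterm.
  field. repeat split; auto.
Qed.

Lemma Admissible_of_f_denoms_ok a k z q s :
  toC q <> 0 -> (Cnorm q < 1)%R -> (Cnorm (Cmul q a) < Cnorm z)%R ->
  f_denoms_ok a k z q s -> Admissible (toC a) (toC k) (toC z) (toC q).
Proof.
  intros Hq Hq1 Hqa [Ha [Hz Hden]]. rewrite !Cnorm_toC, toC_mul in *.
  assert (Hd : forall i, qp (toC q * toC k) (toC q) (S i) <> 0 /\
                 qp (toC q * toC k / toC z) (toC q) (S i) <> 0 /\
                 qp (toC q * toC a) (toC q) (S i) <> 0).
  { intros i. specialize (Hden (S i) ltac:(lia)). apply toC_neq0 in Hden. rewrite toC_f_den in Hden.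
    repeat match type of Hden with _ * _ <> _ => apply Cmult_neq_0_inv in Hden as [Hden ?] end.
    repeat split; assumption. }
  constructor; auto using toC_neq0; intros i; apply (qp_factor_neq0 _ _ (S i)); try lia; apply Hd.
Qed.

Theorem lemma2p2 (a k z q sa sk : Cplx)
  (Hsa : Cmul sa sa = a) (Hsk : Cmul sk sk = k)
  (Hq : Cnorm q < 1)
  (Hqa : Cnorm (Cmul q a) < Cnorm z) (Hqk : Cnorm (Cmul q k) < Cnorm z)
  (Hd1 : f_denoms_ok a k z q sk) (Hd2 : f_denoms_ok k a z q sa) :
  exists L : Cplx,
    series1_cv (f_term a k z q sk) L /\
    series1_cv (f_term k a z q sa) (Copp L).
Proof.
  assert (Hak : exists L, cv_series (summand (toC a) (toC k) (toC z) (toC q)) L /\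
                          cv_series (summand (toC k) (toC a) (toC z) (toC q)) (- L)).
  { destruct (Classical_Prop.classic (toC q = 0)) as [Hq0 | Hq0].
    - exists 0. rewrite Hq0, Copp_0. split; apply cv_series_zero; intros n; apply summand_q0.
    - apply summand_series_antisym; eapply Admissible_of_f_denoms_ok; eauto. }
  destruct Hak as [L [HL1 HL2]].
  exists (mkC (fst L) (snd L)).
  split; (eapply series1_cv_toC; [intros n Hn; apply toC_f_term; eauto |]); destruct L; assumption.
Qed.
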